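(* Fix a round with load $v>0$ for agent $i$. Suppose the allocation is the MMF output for entitlements $e$, where agent $i$'s reported demand is $d_i=\hat\rho\,v$ for some $\hat\rho\ge0$ and the other agents' reported demands are arbitrary, and let $a_i$ be agent $i$'s allocation. Let $\bar\rho\ge\max(\rho_i,\hat\rho)$. Then $u_i(e_i/v)-u_i(a_i/v)\le L_i(\bar\rho-\hat\rho)$.
   Context: A divisible resource of size $1$ is shared by $n$ agents with entitlements $e_i>0$, $\sum_ie_i=1$. MMF$(e,d)$ on reported demands $d_1,\dots,d_n\ge0$: set $r=1$, $E=1$, $S=\{1,\dots,n\}$, $a=0$; process agents $j$ in ascending order of $d_j/e_j$; if $d_j<re_j/E$, set $a_j=d_j$, remove $j$ from $S$, $r\leftarrow r-d_j$, $E\leftarrow E-e_j$ and continue; otherwise set $a_k=re_k/E$ for all $k\in S$ and stop; output $a$. Agent $i$ has unit demand (demand per unit load) $\rho_i\ge0$ and a utility $u_i$ of allocation per unit load that is strictly increasing on $[0,\rho_i]$, constant on $[\rho_i,\infty)$, and $L_i$-Lipschitz. *)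

From HB Require Import structures.
From mathcomp Require Import all_boot all_order all_algebra.
From mathcomp Require Import reals.
Set Implicit Arguments. Unset Strict Implicit. Unset Printing Implicit Defensive.
Import Order.TTheory GRing.Theory Num.Theory.
Local Open Scope ring_scope.

(* The MMF procedure run along a processing order [s] (a list of agents).
   [r] = remaining resource, [E] = remaining total entitlement, the agents
   still in S are exactly those in [s]. *)
Fixpoint mmf_aux (I : eqType) (R : realFieldType) (e d : I -> R)
    (r E : R) (s : seq I) : I -> R :=
  match s with
  | [::] => fun _ => 0
  | j :: s' =>
      if d j < r * e j / E then
        fun k => if k == j then d j else mmf_aux e d (r - d j) (E - e j) s' k
      else fun k => if k \in s then r * e k / E else 0
  end.

Definition mmf (I : eqType) (R : realFieldType) (e d : I -> R) (ord : seq I)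
  : I -> R := mmf_aux e d 1 1 ord.

Definition mmf_order (n : nat) (R : realFieldType) (e d : 'I_n -> R)
    (ord : seq 'I_n) : Prop :=
  perm_eq ord (enum 'I_n) /\ sorted (fun j k => d j / e j <= d k / e k) ord.

(* MMF gives every agent at least min(d_i, e_i): along the processing order the
   remaining resource r never drops below the remaining entitlement E, so the
   final equal-share r e_i / E is at least e_i.  If a_i >= e_i agent i loses
   nothing; otherwise a_i >= d_i = rhohat v, and since u is flat beyond
   rho <= rhobar, comparing u at min(e_i/v, rhobar) and at rhohat with the
   Lipschitz bound gives the loss L (rhobar - rhohat). *)

From HB Require Import structures.
From mathcomp Require Import all_boot all_order all_algebra.
From mathcomp Require Import reals.
From mathcomp Require Import lra.

Set Implicit Arguments.
Unset Strict Implicit.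
Import Order.TTheory GRing.Theory Num.Theory.
Local Open Scope ring_scope.

Section MMFShare.

Variables (I : eqType) (R : realFieldType) (e d : I -> R).
Hypothesis e_gt0 : forall j, 0 < e j.

Lemma mmf_aux_ge_min (s : seq I) (r E : R) (i : I) :
  E = \sum_(k <- s) e k -> E <= r -> i \in s ->
  Num.min (d i) (e i) <= mmf_aux e d r E s i.
Proof.
elim: s r E => [|j s IHs] r E //= hE hEr i_js.
have sum_s_ge0 : 0 <= \sum_(k <- s) e k by apply: sumr_ge0 => k _; exact: ltW.
have ej_gt0 := e_gt0 j.
rewrite big_cons in hE.
have E_gt0 : 0 < E by lra.
case: ifP => dj_lt.
  case: eqP => [->|/eqP i_neq_j]; first by rewrite ge_min lexx.
  have i_s : i \in s by rewrite inE (negbTE i_neq_j) in i_js.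
  apply: IHs => //; first lra.
  have djE_lt : d j * E < r * e j.
    by rewrite -(@ltr_pM2r _ E^-1) ?invr_gt0 // mulfK ?gt_eqF // mulrAC.
  (* (r - E) (E - e_j) >= 0 turns d_j E < r e_j into E - e_j <= r - d_j. *)
  have : 0 <= (r - E) * (E - e j) by apply: mulr_ge0; lra.
  rewrite -(@ler_pM2r _ E) //; nra.
rewrite i_js ge_min; apply/orP; right; rewrite ler_pdivlMr //.
have : 0 <= (r - E) * e i by apply: mulr_ge0; [lra | exact: ltW].
lra.
Qed.

End MMFShare.

Lemma mmf_ge_min (I : finType) (R : realFieldType) (e d : I -> R)
    (ord : seq I) (i : I) :
  (forall j, 0 < e j) -> \sum_j e j = 1 -> perm_eq ord (enum I) ->
  Num.min (d i) (e i) <= mmf e d ord i.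
Proof.
move=> e_gt0 e_sum1 ord_perm; apply: mmf_aux_ge_min => //.
- by rewrite (perm_big _ ord_perm) big_enum.
- by rewrite (perm_mem ord_perm) mem_enum.
Qed.

Section SaturatingUtility.

Variables (R : realFieldType) (rho L : R) (u : R -> R).
Hypothesis u_incr : forall x y, 0 <= x -> x < y -> y <= rho -> u x < u y.
Hypothesis u_sat : forall x, rho <= x -> u x = u rho.
Hypothesis u_lip :
  forall x y, 0 <= x -> 0 <= y -> `|u x - u y| <= L * `|x - y|.

Lemma utility_le (x y : R) : 0 <= x -> x <= y -> u x <= u y.
Proof.
move=> x_ge0; rewrite le_eqVlt => /orP [/eqP <- //|x_lt_y].
have [rho_le_x|x_lt_rho] := lerP rho x.
  by rewrite !u_sat //; lra.
have [y_le_rho|rho_lt_y] := lerP y rho; first exact/ltW/u_incr.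
by rewrite (u_sat (ltW rho_lt_y)); exact/ltW/u_incr.
Qed.

Lemma utility_min_sat (x rhobar : R) : rho <= rhobar ->
  u x = u (Num.min x rhobar).
Proof.
move=> rho_le_rhobar; have [//|rhobar_lt_x] := leP x rhobar.
by rewrite !u_sat //; lra.
Qed.

Lemma lipschitz_ge0 : 0 <= L.
Proof.
have := u_lip (lexx 0) ler01.
rewrite sub0r normrN normr1 mulr1; apply: le_trans; exact: normr_ge0.
Qed.

Lemma utility_loss_le (x y rhohat rhobar : R) :
  0 <= x -> 0 <= rhohat -> rhohat <= y -> Num.max rho rhohat <= rhobar ->
  u x - u y <= L * (rhobar - rhohat).
Proof.
move=> x_ge0 rhohat_ge0 rhohat_le_y; rewrite ge_max => /andP [rho_le rhohat_le].
have L_ge0 := lipschitz_ge0.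
have u_y := utility_le rhohat_ge0 rhohat_le_y.
rewrite (utility_min_sat x rho_le).
set m := Num.min x rhobar.
have m_ge0 : 0 <= m by rewrite le_min x_ge0 (le_trans rhohat_ge0).
have m_le : m <= rhobar by rewrite ge_min lexx orbT.
have [rhohat_le_m|m_lt_rhohat] := leP rhohat m.
  have := u_lip m_ge0 rhohat_ge0.
  rewrite (ger0_norm (x := m - rhohat)); last lra.
  have : L * (m - rhohat) <= L * (rhobar - rhohat) by apply: ler_wpM2l; lra.
  have := ler_norm (u m - u rhohat); lra.
have := utility_le m_ge0 (ltW m_lt_rhohat).
have : 0 <= L * (rhobar - rhohat) by apply: mulr_ge0; lra.
lra.
Qed.

End SaturatingUtility.

Theorem lemma3 (R : realType) (n : nat) (e : 'I_n -> R)
  (he_pos : forall j, 0 < e j) (he_sum : \sum_(j < n) e j = 1)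
  (i : 'I_n) (rho L : R) (u : R -> R)
  (hrho : 0 <= rho)
  (hu_incr : forall x y, 0 <= x -> x < y -> y <= rho -> u x < u y)
  (hu_const : forall x, rho <= x -> u x = u rho)
  (hu_lip : forall x y, 0 <= x -> 0 <= y -> `|u x - u y| <= L * `|x - y|)
  (v rhohat rhobar : R) (hv : 0 < v) (hrhohat : 0 <= rhohat)
  (d : 'I_n -> R) (hd : forall j, 0 <= d j) (hdi : d i = rhohat * v)
  (ord : seq 'I_n) (hord : mmf_order e d ord)
  (hrhobar : Num.max rho rhohat <= rhobar) :
  u (e i / v) - u (mmf e d ord i / v) <= L * (rhobar - rhohat).
Proof.
have loss_bound_ge0 : 0 <= L * (rhobar - rhohat).
  apply: mulr_ge0; first exact: lipschitz_ge0 hu_lip.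
  by move: hrhobar; rewrite ge_max subr_ge0 => /andP [_ ->].
have ei_share_ge0 : 0 <= e i / v by rewrite divr_ge0 // ltW.
have := mmf_ge_min d i he_pos he_sum hord.1; rewrite ge_min => /orP [].
  rewrite hdi -ler_pdivlMr // => rhohat_le.
  exact (utility_loss_le hu_incr hu_const hu_lip ei_share_ge0 hrhohat rhohat_le hrhobar).
move=> ei_le; have ei_share_le : e i / v <= mmf e d ord i / v.
  by rewrite ler_pM2r ?invr_gt0.
have := utility_le hu_incr hu_const ei_share_ge0 ei_share_le; lra.
Qed.
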